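(* Let $p\in(1,\infty)$ and $n_1,n_2\in\mathbb N$ with $n_1\le n_2$. If $\mathbb H^{n_2}\in\mathbb T^{n_2}_p(\tau,m)$ with $\tau>0$, then $$\mathbb H^{n_1}(\mathbb H^{n_2}):=\Big\{\frac{\boldsymbol z}{\|\boldsymbol z\|_p}:\boldsymbol z\in\mathbb R^{n_1},\ \boldsymbol z\ne\boldsymbol0,\ \boldsymbol z\vee\boldsymbol y\in\mathbb H^{n_2}\text{ for some }\boldsymbol y\in\mathbb R^{n_2-n_1}\Big\}\in\mathbb T^{n_1}_p(\tau,m).$$
   Context: $1/p+1/q=1$; $\mathbb S^N_p$ unit $\ell_p$-sphere in $\mathbb R^N$; $\mathbb T^N_p(\tau,m)$ the family of $\mathbb H\subseteq\mathbb S^N_p$ with $|\mathbb H|\le m$ such that every $\boldsymbol x\in\mathbb S^N_q$ has $\boldsymbol v\in\mathbb H$ with $\boldsymbol x^{\mathrm T}\boldsymbol v\ge\tau$. $\boldsymbol z\vee\boldsymbol y$ is the concatenation of vectors. *)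

From HB Require Import structures.
From mathcomp Require Import all_boot all_order all_algebra.
From mathcomp Require Import all_classical all_reals.
From mathcomp Require Import exp.
Unset Printing Implicit Defensive.
Import Order.TTheory GRing.Theory Num.Theory.
Local Open Scope ring_scope.
Local Open Scope classical_set_scope.

Definition normp (R : realType) (p : R) (N : nat) (x : 'rV[R]_N) : R :=
  (\sum_(i < N) `|x 0 i| `^ p) `^ p^-1.

Definition dotv (R : realType) (N : nat) (x v : 'rV[R]_N) : R :=
  \sum_(i < N) x 0 i * v 0 i.

(* conjugate exponent q with 1/p + 1/q = 1 *)
Definition conj_exp (R : realType) (p : R) : R := p / (p - 1).

Definition sphere (R : realType) (p : R) (N : nat) : set 'rV[R]_N :=
  [set x | @normp R p N x = 1].

Definition Tfam (R : realType) (p : R) (N : nat) (tau : R) (m : nat)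
  (H : set 'rV[R]_N) : Prop :=
  [/\ H `<=` @sphere R p N,
      (exists s : seq 'rV[R]_N, (size s <= m)%N /\ H `<=` [set` s])
    & forall x, @sphere R (@conj_exp R p) N x -> exists2 v, H v & tau <= @dotv R N x v].

Definition vcat (R : realType) (n1 n2 : nat) (h : (n1 <= n2)%N)
  (z : 'rV[R]_n1) (y : 'rV[R]_(n2 - n1)) : 'rV[R]_n2 :=
  castmx (erefl 1%N, subnKC h) (row_mx z y).

Definition restrH (R : realType) (p : R) (n1 n2 : nat) (h : (n1 <= n2)%N)
  (H : set 'rV[R]_n2) : set 'rV[R]_n1 :=
  [set w | exists z : 'rV[R]_n1, [/\ z != 0,
      (exists y : 'rV[R]_(n2 - n1), H (@vcat R n1 n2 h z y))
    & w = (@normp R p n1 z)^-1 *: z]].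

From HB Require Import structures.
From mathcomp Require Import all_boot all_order all_algebra.
From mathcomp Require Import all_classical all_reals.
From mathcomp Require Import exp.
Import Order.TTheory GRing.Theory Num.Theory.
Local Open Scope ring_scope.
Local Open Scope classical_set_scope.

(* Padding a point x of the q-sphere in R^n1 with zeros gives a point of the
   q-sphere in R^n2, so some v = z \/ y in H has tau <= (x \/ 0)^T v = x^T z.
   As tau > 0, z is nonzero, and ||z||_p <= ||v||_p = 1, so dividing z by its
   norm only increases x^T z. The restricted family is the image of H under
   v |-> z / ||z||_p, hence has at most as many elements. *)

Arguments normp {R} p {N} x.
Arguments dotv {R} {N} x v.
Arguments sphere {R} p {N} _.
Arguments vcat {R} {n1 n2} h z y.
Arguments restrH {R} p {n1 n2} h H.

Section Concatenation.
Context {R : realType} {n1 n2 : nat} (h : (n1 <= n2)%N).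

Lemma big_castmx_row_mx2 {k n} (e : (k + n)%N = n2) (z1 z2 : 'rV[R]_k)
    (y1 y2 : 'rV[R]_n) (F : R -> R -> R) :
  \sum_(i < n2) F (castmx (erefl 1%N, e) (row_mx z1 y1) 0 i)
                  (castmx (erefl 1%N, e) (row_mx z2 y2) 0 i) =
  \sum_(i < k) F (z1 0 i) (z2 0 i) + \sum_(i < n) F (y1 0 i) (y2 0 i).
Proof.
case: n2 / e; rewrite !castmx_id big_split_ord /=.
by congr (_ + _); apply: eq_bigr => i _; rewrite ?row_mxEl ?row_mxEr.
Qed.

Lemma big_vcat (z : 'rV[R]_n1) (y : 'rV[R]_(n2 - n1)) (F : R -> R) :
  \sum_(i < n2) F (vcat h z y 0 i) =
  \sum_(i < n1) F (z 0 i) + \sum_(i < n2 - n1) F (y 0 i).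
Proof. exact: (big_castmx_row_mx2 (subnKC h) z z y y (fun a _ => F a)). Qed.

Lemma dotv_vcat0 (x z : 'rV[R]_n1) (y : 'rV[R]_(n2 - n1)) :
  dotv (vcat h x 0) (vcat h z y) = dotv x z.
Proof.
rewrite /dotv (big_castmx_row_mx2 (subnKC h) _ _ _ _ (fun a b => a * b)).
by rewrite [X in _ + X]big1 ?addr0 // => i _; rewrite mxE mul0r.
Qed.

Definition vlsub (v : 'rV[R]_n2) : 'rV[R]_n1 :=
  lsubmx (castmx (erefl 1%N, esym (subnKC h)) v).

Definition vrsub (v : 'rV[R]_n2) : 'rV[R]_(n2 - n1) :=
  rsubmx (castmx (erefl 1%N, esym (subnKC h)) v).

Lemma vcatKl (z : 'rV[R]_n1) (y : 'rV[R]_(n2 - n1)) : vlsub (vcat h z y) = z.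
Proof. by rewrite /vlsub /vcat castmx_comp castmx_id row_mxKl. Qed.

Lemma vcat_sub (v : 'rV[R]_n2) : vcat h (vlsub v) (vrsub v) = v.
Proof. by rewrite /vcat hsubmxK castmxKV. Qed.

End Concatenation.

Section Norms.
Context {R : realType} (p : R) {n : nat}.
Hypothesis p_gt0 : 0 < p.

Lemma normp_gt0 (z : 'rV[R]_n) : z != 0 -> 0 < normp p z.
Proof.
move=> z0; apply: powR_gt0.
have [i zi] : exists i, z 0 i != 0.
  apply/existsP; apply: contraNT z0 => /existsPn zi0.
  by apply/eqP/rowP => i; rewrite mxE; apply/eqP; move: (zi0 i); rewrite negbK.
rewrite (bigD1 i) //=; apply: (@lt_le_trans _ _ (`|z 0 i| `^ p)).
- by apply: powR_gt0; rewrite normr_gt0.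
- by rewrite lerDl; apply: sumr_ge0 => j _; apply: powR_ge0.
Qed.

Lemma normpZ (c : R) (z : 'rV[R]_n) : 0 <= c -> normp p (c *: z) = c * normp p z.
Proof.
move=> c0; rewrite /normp.
under eq_bigr => i _ do rewrite mxE normrM (ger0_norm c0) powRM //.
rewrite -mulr_sumr powRM ?powR_ge0 ?sumr_ge0 // => [|i _]; last exact: powR_ge0.
by rewrite -powRrM mulfV ?gt_eqF // powRr1.
Qed.

Lemma sphere_normalize (z : 'rV[R]_n) : z != 0 -> sphere p ((normp p z)^-1 *: z).
Proof.
move=> z0; have N0 := @normp_gt0 z z0.
by rewrite /sphere /= normpZ ?mulVf ?gt_eqF // invr_ge0 ltW.
Qed.

Lemma dotvZr (x z : 'rV[R]_n) (c : R) : dotv x (c *: z) = c * dotv x z.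
Proof.
by rewrite /dotv mulr_sumr; apply: eq_bigr => i _; rewrite mxE mulrCA.
Qed.

Lemma dotv_le_normalize (x z : 'rV[R]_n) :
  z != 0 -> normp p z <= 1 -> 0 <= dotv x z ->
  dotv x z <= dotv x ((normp p z)^-1 *: z).
Proof.
move=> z0 N1 xz0; have N0 := @normp_gt0 z z0.
rewrite dotvZr ler_peMl // invr_ge1 //; exact: unitf_gt0.
Qed.

End Norms.

Section Restriction.
Context {R : realType} (p : R) {n1 n2 : nat} (h : (n1 <= n2)%N).
Hypothesis p_gt0 : 0 < p.

Lemma normp_le_vcat (z : 'rV[R]_n1) (y : 'rV[R]_(n2 - n1)) :
  normp p z <= normp p (vcat h z y).
Proof.
have sum_ge0 k (w : 'rV[R]_k) : 0 <= \sum_(i < k) `|w 0 i| `^ p.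
  by apply: sumr_ge0 => i _; apply: powR_ge0.
rewrite /normp (big_vcat h z y (fun a => `|a| `^ p)).
apply: ge0_ler_powR; rewrite ?nnegrE ?addr_ge0 ?lerDl //.
by rewrite invr_ge0 ltW.
Qed.

Lemma normp_vcat0 (x : 'rV[R]_n1) : normp p (vcat h x 0) = normp p x.
Proof.
rewrite /normp (big_vcat h x 0 (fun a => `|a| `^ p)).
by rewrite [X in _ + X]big1 ?addr0 // => i _; rewrite mxE normr0 powR0 ?gt_eqF.
Qed.

Lemma restrH_sub_sphere (H : set 'rV[R]_n2) : restrH p h H `<=` sphere p.
Proof. by move=> w [z [z0 _ ->]]; apply: sphere_normalize. Qed.

Lemma restrH_sub_seq (H : set 'rV[R]_n2) (s : seq 'rV[R]_n2) :
  H `<=` [set` s] ->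
  restrH p h H `<=` [set` map (fun v => (normp p (vlsub h v))^-1 *: vlsub h v) s].
Proof.
move=> Hs w [z [_ [y Hy] ->]] /=.
by rewrite -(vcatKl h z y); apply/map_f/Hs.
Qed.

End Restriction.

Lemma conj_exp_gt0 (R : realType) (p : R) : 1 < p -> 0 < conj_exp R p.
Proof. by move=> p1; rewrite divr_gt0 ?subr_gt0 // (lt_trans ltr01). Qed.

Lemma restrH_cover (R : realType) (p : R) (n1 n2 : nat) (h : (n1 <= n2)%N)
    (tau : R) (H : set 'rV[R]_n2) :
  1 < p -> 0 < tau -> H `<=` sphere p ->
  (forall x, sphere (conj_exp R p) x -> exists2 v, H v & tau <= dotv x v) ->
  forall x, sphere (conj_exp R p) x ->
    exists2 w, restrH p h H w & tau <= dotv x w.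
Proof.
move=> p1 tau0 Hsph Hcov x x1; have p0 : 0 < p by apply: lt_trans p1.
have [|v Hv tau_le] := Hcov (vcat h x 0).
  by rewrite /sphere /= normp_vcat0 ?conj_exp_gt0.
rewrite -(vcat_sub h v) dotv_vcat0 in tau_le.
set z := vlsub h v in tau_le *.
have z0 : z != 0.
  apply: contraTneq tau_le => ->.
  by rewrite -ltNge /dotv big1 // => i _; rewrite mxE mulr0.
have N1 : normp p z <= 1.
  by rewrite -(Hsph _ Hv) -(vcat_sub h v) normp_le_vcat.
exists ((normp p z)^-1 *: z).
  by exists z; split=> //; exists (vrsub h v); rewrite vcat_sub.
apply: (le_trans tau_le); apply: dotv_le_normalize => //.
  exact: le_trans (ltW tau0) tau_le.
Qed.

Theorem lemma4p7 (R : realType) (p : R) (n1 n2 : nat) (h : (n1 <= n2)%N)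
  (tau : R) (m : nat) (H : set 'rV[R]_n2) :
  1 < p -> 0 < tau -> @Tfam R p n2 tau m H -> @Tfam R p n1 tau m (@restrH R p n1 n2 h H).
Proof.
move=> p1 tau0 [Hsph [s [size_s Hs]] Hcov]; have p0 : 0 < p by apply: lt_trans p1.
split.
- exact: restrH_sub_sphere.
- by eexists; split; last exact: restrH_sub_seq Hs; rewrite size_map.
- exact: restrH_cover.
Qed.
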